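(* Let $\mathcal C\subseteq\mathbf F_q^n$ be a nonzero linear code of dimension $k$ and minimum distance $d$. Then $$s(\mathcal C)=\begin{cases}k & \text{if } 2d\ge n+2,\\ k-\min\{\Delta_{d-1},\dots,\Delta_{n-d+1}\} & \text{otherwise.}\end{cases}$$
   Context: The coordinate order of $\mathcal C$ is fixed. Define $\mathcal P_0=\mathcal F_n=0$, $\mathcal P_n=\mathcal F_0=\mathcal C$, and for $1\le i\le n-1$, $\mathcal P_i=\{(c_1,\dots,c_i):(c_1,\dots,c_i,0,\dots,0)\in\mathcal C\}$ and $\mathcal F_i=\{(c_{i+1},\dots,c_n):(0,\dots,0,c_{i+1},\dots,c_n)\in\mathcal C\}$. Put $\Delta_i=\dim\mathcal P_i+\dim\mathcal F_i$. The state complexity of $\mathcal C$ (that of its minimal trellis) is $s(\mathcal C)=k-\min_{0\le i\le n}\Delta_i$. *)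

From HB Require Import structures.
From mathcomp Require Import all_boot all_order all_algebra all_field.
Set Implicit Arguments. Unset Strict Implicit. Unset Printing Implicit Defensive.
Import GRing.Theory.
Local Open Scope ring_scope.

Section Codes.
Variables (F : finFieldType) (n : nat).

Definition wt (c : 'rV[F]_n) : nat := #|[set j : 'I_n | c 0 j != 0]|.

Definition prefix_mx (i : nat) : 'M[F]_(i, n) :=
  \matrix_(a < i, b < n) ((a : nat) == b)%:R.
Definition suffix_mx (i : nat) : 'M[F]_(n - i, n) :=
  \matrix_(a < n - i, b < n) ((b : nat) == i + a)%N%:R.

(* P_i = {(c_1..c_i) : (c_1..c_i,0..0) in C} as a subspace of F^i *)
Definition Pcode (C : {vspace 'rV[F]_n}) (i : nat) : {vspace 'rV[F]_i} :=
  (linfun (mulmxr (prefix_mx i)) @^-1: C)%VS.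
(* F_i = {(c_{i+1}..c_n) : (0..0,c_{i+1}..c_n) in C} as a subspace of F^(n-i) *)
Definition Fcode (C : {vspace 'rV[F]_n}) (i : nat) : {vspace 'rV[F]_(n - i)} :=
  (linfun (mulmxr (suffix_mx i)) @^-1: C)%VS.

Definition Delta (C : {vspace 'rV[F]_n}) (i : nat) : nat :=
  (\dim (Pcode C i) + \dim (Fcode C i))%N.

Definition state_complexity (C : {vspace 'rV[F]_n}) : nat :=
  (\dim C - \big[minn/Delta C 0]_(0 <= i < n.+1) Delta C i)%N.

End Codes.

(** Codewords have weight at least d, so P_i = 0 for i < d and F_i = 0 for
    i > n - d, while dim P_i increases and dim F_i decreases with i.  Hence
    Delta_i = dim F_i is nonincreasing on [0, d-1] and Delta_i = dim P_i is
    nondecreasing on [n-d+1, n], so the minimum of Delta over [0, n] is its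
    minimum over [d-1, n-d+1].  When 2d >= n+2 both P_{d-1} and F_{d-1}
    vanish, so the minimum is 0. *)
From HB Require Import structures.
From mathcomp Require Import all_boot all_order all_algebra.
From mathcomp Require Import zify.

Set Implicit Arguments.
Unset Strict Implicit.
Unset Printing Implicit Defensive.

Import Order.TTheory GRing.Theory.
Local Open Scope ring_scope.

Section BigMinNat.
Variables (G : nat -> nat) (x0 lo hi : nat).

Lemma bigminn_nat_le_idx : (\big[minn/x0]_(lo <= j < hi) G j <= x0)%N.
Proof. by rewrite -minEnat -leEnat bigmin_le_id. Qed.

Lemma bigminn_nat_le i :
  (lo <= i < hi)%N -> (\big[minn/x0]_(lo <= j < hi) G j <= G i)%N.
Proof. by rewrite -mem_index_iota -minEnat -leEnat => i_in; apply: ge_bigmin_seq. Qed.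

Lemma leq_bigminn_nat m :
  (m <= x0)%N -> (forall i, lo <= i < hi -> m <= G i)%N ->
  (m <= \big[minn/x0]_(lo <= j < hi) G j)%N.
Proof.
move=> le_m_x0 le_m_G; rewrite -minEnat -leEnat big_seq.
by apply: le_bigmin => // i; rewrite mem_index_iota; apply: le_m_G.
Qed.

End BigMinNat.

Lemma bigminn_nat_valley (G : nat -> nat) a b m :
    (a <= b <= m)%N ->
    (forall i, i <= a -> G a <= G i)%N ->
    (forall i, b <= i <= m -> G b <= G i)%N ->
  \big[minn/G 0]_(0 <= i < m.+1) G i = \big[minn/G a]_(a <= i < b.+1) G i.
Proof.
move=> /andP[le_ab le_bm] G_le_a G_le_b.
have min_ab_le i : (i <= m)%N -> (\big[minn/G a]_(a <= j < b.+1) G j <= G i)%N.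
  move=> le_im; case: (ltnP i a) => [lt_ia | le_ai].
    exact: leq_trans (bigminn_nat_le_idx _ _ _ _) (G_le_a i (ltnW lt_ia)).
  case: (leqP i b) => [le_ib | lt_bi]; first by apply: bigminn_nat_le; lia.
  by apply: leq_trans (G_le_b i _); [apply: bigminn_nat_le | ]; lia.
apply/eqP; rewrite eqn_leq; apply/andP; split.
  by apply: leq_bigminn_nat => [|i i_in]; apply: bigminn_nat_le; lia.
apply: leq_bigminn_nat => [|i]; first exact: min_ab_le.
by rewrite ltnS => /andP[_ /min_ab_le].
Qed.

Lemma dim_lpreim (K : fieldType) (aT rT : vectType K) (f : 'Hom(aT, rT))
    (W : {vspace rT}) :
  \dim (f @^-1: W) = (\dim (W :&: limg f) + \dim (lker f))%N.
Proof.
have -> : (W :&: limg f)%VS = (f @: (f @^-1: W))%VS.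
  by rewrite -lpreim_cap_limg lpreimK ?capvSr.
have ker_sub : (lker f <= f @^-1: W)%VS by rewrite -lpreim0 lpreimS ?sub0v.
by rewrite -(limg_ker_dim f (f @^-1: W)) (capv_idPr ker_sub) addnC.
Qed.

Section Embeddings.
Variables (F : finFieldType) (n : nat).

Definition vanish_outside (lo hi : nat) (c : 'rV[F]_n) : Prop :=
  forall b : 'I_n, (b < lo)%N || (hi <= b)%N -> c 0 b = 0.

Lemma wt_vanish_outside lo hi c : vanish_outside lo hi c -> (wt c <= hi - lo)%N.
Proof.
move=> c_out; rewrite /wt cardE -(size_map val) -(size_iota lo (hi - lo)).
apply: uniq_leq_size; first by rewrite map_inj_uniq ?enum_uniq //; apply: val_inj.
move=> x /mapP[j]; rewrite mem_enum inE => cj_neq0 ->; rewrite mem_iota /=.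
by apply: contraNT cj_neq0 => j_out; apply/eqP/c_out; lia.
Qed.

Lemma wt_eq0 (c : 'rV[F]_n) : (wt c == 0%N) = (c == 0).
Proof.
rewrite /wt cards_eq0; apply/eqP/eqP => [supp0 | ->].
  apply/rowP => j; apply/eqP; rewrite mxE; apply: contraFT (in_set0 j).
  by rewrite -supp0 inE.
by apply/setP => j; rewrite !inE mxE eqxx.
Qed.

Local Notation prefix i :=
  (linfun (mulmxr (prefix_mx F n i)) : 'Hom('rV[F]_i, 'rV[F]_n)).
Local Notation suffix i :=
  (linfun (mulmxr (suffix_mx F n i)) : 'Hom('rV[F]_(n - i), 'rV[F]_n)).

Lemma mul_prefix_mx_widen m (le_mn : (m <= n)%N) (y : 'rV[F]_m) (a : 'I_m) :
  (y *m prefix_mx F n m) 0 (widen_ord le_mn a) = y 0 a.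
Proof.
rewrite mxE (bigD1 a) //= mxE eqxx mulr1 big1 ?addr0 // => k ne_ka.
rewrite mxE; case: eqP => [eq_ka | _]; last by rewrite mulr0.
by case/eqP: ne_ka; apply: val_inj.
Qed.

Lemma mul_prefix_mx_ge m (y : 'rV[F]_m) (b : 'I_n) :
  (m <= b)%N -> (y *m prefix_mx F n m) 0 b = 0.
Proof.
move=> le_mb; rewrite mxE big1 // => k _; rewrite mxE.
by case: eqP => [eq_kb | _]; [move: (ltn_ord k); rewrite eq_kb ltnNge le_mb | rewrite mulr0].
Qed.

Fact suffix_ord_subproof i (a : 'I_(n - i)) : (i + a < n)%N.
Proof. by rewrite -ltn_subRL. Qed.

Definition suffix_ord i (a : 'I_(n - i)) : 'I_n := Ordinal (suffix_ord_subproof a).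

Lemma mul_suffix_mx_shift i (y : 'rV[F]_(n - i)) (a : 'I_(n - i)) :
  (y *m suffix_mx F n i) 0 (suffix_ord a) = y 0 a.
Proof.
rewrite mxE (bigD1 a) //= mxE eqxx mulr1 big1 ?addr0 // => k ne_ka.
rewrite mxE /=; case: eqP => [eq_ak | _]; last by rewrite mulr0.
by case/eqP: ne_ka; apply: val_inj; apply/eqP; rewrite -(eqn_add2l i) eq_ak.
Qed.

Lemma mul_suffix_mx_lt i (y : 'rV[F]_(n - i)) (b : 'I_n) :
  (b < i)%N -> (y *m suffix_mx F n i) 0 b = 0.
Proof.
move=> lt_bi; rewrite mxE big1 // => k _; rewrite mxE.
by case: eqP => [eq_b | _]; [move: lt_bi; rewrite eq_b ltnNge leq_addr | rewrite mulr0].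
Qed.

Lemma memv_limg_prefix i c :
  (i <= n)%N -> c \in limg (prefix i) <-> vanish_outside 0 i c.
Proof.
move=> le_in; split.
  by case/memv_imgP => y _ -> b /= le_ib; rewrite lfunE mul_prefix_mx_ge.
move=> c_out; apply/memv_imgP; exists (\row_(a < i) c 0 (widen_ord le_in a)).
  exact: memvf.
apply/rowP => b; rewrite lfunE /=; case: (ltnP b i) => [lt_bi | le_ib].
  have -> : b = widen_ord le_in (Ordinal lt_bi) by apply: val_inj.
  by rewrite mul_prefix_mx_widen mxE.
by rewrite mul_prefix_mx_ge // c_out // le_ib orbT.
Qed.

Lemma memv_limg_suffix i c : c \in limg (suffix i) <-> vanish_outside i n c.
Proof.
split.
  case/memv_imgP => y _ -> b; rewrite lfunE => /orP[lt_bi | ].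
    exact: mul_suffix_mx_lt.
  by rewrite leqNgt ltn_ord.
move=> c_out; apply/memv_imgP; exists (\row_(a < n - i) c 0 (suffix_ord a)).
  exact: memvf.
apply/rowP => b; rewrite lfunE /=; case: (ltnP b i) => [lt_bi | le_ib].
  by rewrite mul_suffix_mx_lt // c_out // lt_bi.
have lt_b_ni : (b - i < n - i)%N by have := ltn_ord b; lia.
have -> : b = suffix_ord (Ordinal lt_b_ni) by apply: val_inj; rewrite /= subnKC.
by rewrite mul_suffix_mx_shift mxE.
Qed.

Lemma lker_prefix i : (i <= n)%N -> lker (prefix i) = 0%VS.
Proof.
move=> le_in; apply/eqP/lker0P => x y; rewrite !lfunE /= => eq_xy.
by apply/rowP => a; rewrite -!(mul_prefix_mx_widen le_in) eq_xy.
Qed.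

Lemma lker_suffix i : lker (suffix i) = 0%VS.
Proof.
apply/eqP/lker0P => x y; rewrite !lfunE /= => eq_xy.
by apply/rowP => a; rewrite -!(mul_suffix_mx_shift _ a) eq_xy.
Qed.

Variable C : {vspace 'rV[F]_n}.

Lemma dim_Pcode i : (i <= n)%N -> \dim (Pcode C i) = \dim (C :&: limg (prefix i)).
Proof. by move=> le_in; rewrite /Pcode dim_lpreim lker_prefix // dimv0 addn0. Qed.

Lemma dim_Fcode i : \dim (Fcode C i) = \dim (C :&: limg (suffix i)).
Proof. by rewrite /Fcode dim_lpreim lker_suffix dimv0 addn0. Qed.

Lemma leq_dim_Pcode i j :
  (i <= j <= n)%N -> (\dim (Pcode C i) <= \dim (Pcode C j))%N.
Proof.
move=> /andP[le_ij le_jn]; have le_in := leq_trans le_ij le_jn.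
rewrite !dim_Pcode //; apply/dimvS/capvS; first exact: subvv.
apply/subvP => c /(memv_limg_prefix _ le_in) c_out.
by apply/(memv_limg_prefix _ le_jn) => b b_out; apply: c_out; lia.
Qed.

Lemma geq_dim_Fcode i j : (i <= j)%N -> (\dim (Fcode C j) <= \dim (Fcode C i))%N.
Proof.
move=> le_ij; rewrite !dim_Fcode; apply/dimvS/capvS; first exact: subvv.
apply/subvP => c /memv_limg_suffix c_out.
by apply/memv_limg_suffix => b b_out; apply: c_out; lia.
Qed.

Variable d : nat.
Hypothesis min_wt : forall c, c \in C -> c != 0 -> (d <= wt c)%N.

Lemma capv_light_eq0 (V : {vspace 'rV[F]_n}) :
  (forall v, v \in V -> wt v < d)%N -> (C :&: V = 0)%VS.
Proof.
move=> light; apply/eqP; rewrite -subv0; apply/subvP => c /memv_capP[cC cV].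
by rewrite memv0; apply: contraTT (light c cV) => c_neq0; rewrite -leqNgt min_wt.
Qed.

Lemma dim_Pcode_eq0 i : (i < d)%N -> (i <= n)%N -> \dim (Pcode C i) = 0%N.
Proof.
move=> lt_id le_in; rewrite dim_Pcode // capv_light_eq0 ?dimv0 // => v.
by move=> /(memv_limg_prefix _ le_in) /wt_vanish_outside; lia.
Qed.

Lemma dim_Fcode_eq0 i : (n - i < d)%N -> \dim (Fcode C i) = 0%N.
Proof.
move=> lt_nid; rewrite dim_Fcode capv_light_eq0 ?dimv0 // => v.
by move=> /memv_limg_suffix /wt_vanish_outside; lia.
Qed.

End Embeddings.

Theorem proposition2p3 (F : finFieldType) (n : nat) (C : {vspace 'rV[F]_n})
    (d : nat) :
  C != 0%VS ->
  (exists2 c, c \in C & (c != 0) && (wt c == d)) ->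
  (forall c, c \in C -> c != 0 -> (d <= wt c)%N) ->
  state_complexity C =
    (if (n + 2 <= 2 * d)%N then \dim C
     else (\dim C - \big[minn/Delta C d.-1]_(d.-1 <= i < (n - d + 1).+1)
                                Delta C i)%N).
Proof.
(* [C != 0] is implied by the existence of the nonzero codeword [c]. *)
move=> _ [c cC /andP[c_neq0 /eqP wt_c]] min_wt.
have le_dn : (d <= n)%N.
  by rewrite -wt_c /wt (leq_trans (max_card _)) ?card_ord.
have d_gt0 : (0 < d)%N by rewrite -wt_c lt0n wt_eq0.
have Delta_low i : (i <= d.-1)%N -> Delta C i = \dim (Fcode C i).
  by move=> le_i; rewrite /Delta (dim_Pcode_eq0 min_wt); lia.
have Delta_high i : (n - d + 1 <= i <= n)%N -> Delta C i = \dim (Pcode C i).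
  by move=> le_i; rewrite /Delta (dim_Fcode_eq0 min_wt) ?addn0; lia.
rewrite /state_complexity; case: ifP => [le_n2_2d | lt_2d_n2].
  suff -> : \big[minn/Delta C 0]_(0 <= i < n.+1) Delta C i = 0%N by rewrite subn0.
  apply/eqP; rewrite -leqn0; apply: leq_trans (bigminn_nat_le _ _ (i := d.-1) _) _; first lia.
  by rewrite Delta_low // (dim_Fcode_eq0 min_wt); lia.
rewrite (@bigminn_nat_valley _ d.-1 (n - d + 1)) //.
- lia.
- by move=> i le_i; rewrite !Delta_low //; apply: geq_dim_Fcode.
- move=> i le_i; rewrite !Delta_high ?leqnn ?le_i //; last lia.
  by apply: leq_dim_Pcode; lia.
Qed.
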